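(* Let $\alpha\ge2$ be an integer, $\Delta\ge3$ an integer, and $\beta_\mu>\beta_\nu\ge\frac{\Delta-2}{\Delta}$ with $\beta:=(\beta_\nu/\beta_\mu)^\alpha\beta_\mu<\frac{\Delta-2}{\Delta}$. For every $\Delta$-regular graph $G=(V,E)$, letting $\nu,\mu$ be the Gibbs distributions of $(G,\beta_\nu)$ and $(G,\beta_\mu)$, $$Z(G,\beta)\ \le\ \frac{Z(G,\beta_\nu)^\alpha}{Z(G,\beta_\mu)^{\alpha-1}}\sum_{\sigma\in\{-1,+1\}^V}\mu(\sigma)\left(\frac{\nu(\sigma)}{\mu(\sigma)}+1\right)^\alpha\ \le\ 3^\alpha Z(G,\beta).$$
   Context: For a graph $G=(V,E)$ and $\gamma>0$, the Ising model $(G,\gamma)$ has Gibbs distribution on $\{-1,+1\}^V$ given by $\pi(\sigma)=\gamma^{m(\sigma)}/Z(G,\gamma)$, where $m(\sigma)=|\{\{u,v\}\in E:\sigma_u=\sigma_v\}|$ and $Z(G,\gamma)=\sum_{\sigma\in\{-1,+1\}^V}\gamma^{m(\sigma)}$. *)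

From HB Require Import structures.
From mathcomp Require Import all_boot all_order all_algebra.
From mathcomp Require Import reals.
Set Implicit Arguments. Unset Strict Implicit. Unset Printing Implicit Defensive.
Import Order.TTheory GRing.Theory Num.Theory.
Local Open Scope ring_scope.

Definition simple_graph (T : finType) (e : rel T) : Prop :=
  (forall u v, e u v = e v u) /\ (forall u, ~~ e u u).

Definition regular (T : finType) (e : rel T) (Delta : nat) : Prop :=
  forall v : T, #|[set u | e v u]| = Delta.

Definition edges (T : finType) (e : rel T) : {set {set T}} :=
  [set [set u; v] | u in T, v in T & e u v].

(* Spin configurations sigma : V -> {-1,+1}, encoded as bool (true = +1). *)
Definition spin (T : finType) := {ffun T -> bool}.

Definition mono (T : finType) (e : rel T) (s : spin T) : nat :=
  #|[set E in edges e | [forall u in E, forall v in E, s u == s v]]|.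

Definition Zpart (R : realType) (T : finType) (e : rel T) (g : R) : R :=
  \sum_(s : spin T) g ^+ mono e s.

Definition gibbs (R : realType) (T : finType) (e : rel T) (g : R) (s : spin T) : R :=
  g ^+ mono e s / Zpart e g.

From HB Require Import structures.
From mathcomp Require Import all_boot all_order all_algebra.
From mathcomp Require Import reals.
From mathcomp Require Import ring lra zify.

Set Implicit Arguments.
Unset Strict Implicit.
Unset Printing Implicit Defensive.
Import Order.TTheory GRing.Theory Num.Theory.
Local Open Scope ring_scope.

(* With mu, nu the Gibbs distributions at bmu, bnu and alpha >= 1, each term of
   Z(G, beta) factors as nu^alpha / mu^(alpha-1) up to the constant
   Z(G,bnu)^alpha / Z(G,bmu)^(alpha-1), so Z(G, beta) is that constant times
   the alpha-th moment E_mu[x^alpha] of the likelihood ratio x = nu/mu, while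
   the middle quantity is the same constant times E_mu[(x+1)^alpha].  Since
   E_mu[x] = 1, Bernoulli's inequality gives E_mu[x^alpha] >= 1, and then
   (x+1)^alpha <= 2^alpha (x^alpha + 1) yields
   E_mu[(x+1)^alpha] <= 2^(alpha+1) E_mu[x^alpha] <= 3^alpha E_mu[x^alpha]. *)

Lemma bernoulli_ineq (R : realDomainType) (x : R) n :
  0 <= x -> 1 + n%:R * (x - 1) <= x ^+ n.
Proof.
move=> x_ge0; elim: n => [|n IHn]; first by rewrite mul0r addr0 expr0.
rewrite exprS -addn1 natrD.
apply: le_trans (ler_wpM2l x_ge0 IHn).
have gap : x * (1 + n%:R * (x - 1)) - (1 + (n%:R + 1) * (x - 1))
           = n%:R * (x - 1) ^+ 2 by ring.
by rewrite -subr_ge0 gap mulr_ge0 ?sqr_ge0.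
Qed.

Lemma exprDr1_le (R : realDomainType) (x : R) n :
  0 <= x -> (x + 1) ^+ n <= 2 ^+ n * (x ^+ n + 1).
Proof.
move=> x_ge0; rewrite mulrDr mulr1.
have [x_le1 | x_gt1] := lerP x 1.
- apply: (@le_trans _ _ (2 ^+ n)); last by rewrite lerDr mulr_ge0 ?exprn_ge0.
  by apply: lerXn2r; rewrite ?nnegrE; lra.
- apply: (@le_trans _ _ (2 ^+ n * x ^+ n)); last by rewrite lerDl exprn_ge0.
  by rewrite -exprMn; apply: lerXn2r; rewrite ?nnegrE; lra.
Qed.

Lemma expn2S_le_expn3 n : (2 <= n)%N -> (2 ^ n.+1 <= 3 ^ n)%N.
Proof.
case: n => [|[|n]] // _; elim: n => [|n IHn] //.
rewrite (expnS 2 n.+3) (expnS 3 n.+2); lia.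
Qed.

Section WeightedMoments.

Variables (R : realDomainType) (I : finType) (w x : I -> R).
Hypotheses (w_ge0 : forall i, 0 <= w i) (x_ge0 : forall i, 0 <= x i).

Lemma moment_le_shifted n :
  \sum_i w i * x i ^+ n <= \sum_i w i * (x i + 1) ^+ n.
Proof.
apply: ler_sum => i _; rewrite ler_wpM2l //.
by apply: lerXn2r; rewrite ?nnegrE ?addr_ge0 ?lerDl.
Qed.

Hypotheses (sum_w : \sum_i w i = 1) (mean_x : \sum_i w i * x i = 1).

Lemma moment_ge1 n : 1 <= \sum_i w i * x i ^+ n.
Proof.
have avg : \sum_i w i * (1 + n%:R * (x i - 1)) = 1.
  transitivity (\sum_i w i + n%:R * \sum_i w i * x i - n%:R * \sum_i w i).
    by rewrite !mulr_sumr -big_split -sumrB /=; apply: eq_bigr => i _; ring.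
  by rewrite sum_w mean_x addrK.
rewrite -avg; apply: ler_sum => i _.
by rewrite ler_wpM2l ?bernoulli_ineq.
Qed.

Lemma shifted_moment_le n : (2 <= n)%N ->
  \sum_i w i * (x i + 1) ^+ n <= 3%:R ^+ n * \sum_i w i * x i ^+ n.
Proof.
move=> n_ge2; set M := \sum_i w i * x i ^+ n.
have M_ge1 : 1 <= M := moment_ge1 n.
apply: (@le_trans _ _ (\sum_i w i * (2 ^+ n * (x i ^+ n + 1)))).
  by apply: ler_sum => i _; rewrite ler_wpM2l ?exprDr1_le.
have -> : \sum_i w i * (2 ^+ n * (x i ^+ n + 1)) = 2 ^+ n * (M + 1).
  transitivity (2 ^+ n * \sum_i (w i * x i ^+ n + w i)).
    by rewrite mulr_sumr; apply: eq_bigr => i _; ring.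
  by rewrite big_split /= sum_w.
have two_pow : (2 : R) ^+ n * 2 <= 3%:R ^+ n.
  by rewrite -natrX -[2]/(2%:R) -natrX -natrM ler_nat -expnSr expn2S_le_expn3.
have : 0 <= (2 : R) ^+ n by rewrite exprn_ge0.
nra.
Qed.

End WeightedMoments.

Lemma tilt_weight (F : fieldType) (u v Z1 Z2 : F) k :
  v != 0 -> Z1 != 0 -> Z2 != 0 ->
  (u / v) ^+ k.+1 * v
  = Z1 ^+ k.+1 / Z2 ^+ k * (v / Z2 * (u / Z1 / (v / Z2)) ^+ k.+1).
Proof.
move=> v_neq0 Z1_neq0 Z2_neq0; rewrite !expr_div_n !exprS.
by field; rewrite !expf_neq0 // v_neq0 Z1_neq0 Z2_neq0.
Qed.

Section GibbsTilting.

Variables (R : realType) (T : finType) (e : rel T).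

Lemma Zpart_gt0 (g : R) : 0 < g -> 0 < Zpart e g.
Proof.
move=> g_gt0; rewrite /Zpart (bigD1 [ffun=> true]) //=.
by rewrite ltr_wpDr ?exprn_gt0 // sumr_ge0 // => s _; rewrite exprn_ge0 ?ltW.
Qed.

Lemma gibbs_gt0 (g : R) s : 0 < g -> 0 < gibbs e g s.
Proof. by move=> g_gt0; rewrite divr_gt0 ?exprn_gt0 ?Zpart_gt0. Qed.

Lemma sum_gibbs (g : R) : 0 < g -> \sum_s gibbs e g s = 1.
Proof. by move=> g_gt0; rewrite -mulr_suml divff // gt_eqF ?Zpart_gt0. Qed.

Lemma Zpart_tilt (g1 g2 : R) n : 0 < g1 -> 0 < g2 -> (0 < n)%N ->
  Zpart e ((g1 / g2) ^+ n * g2)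
  = Zpart e g1 ^+ n / Zpart e g2 ^+ (n - 1)
    * \sum_s gibbs e g2 s * (gibbs e g1 s / gibbs e g2 s) ^+ n.
Proof.
move=> g1_gt0 g2_gt0; case: n => [|k] // _; rewrite subSS subn0.
rewrite [LHS]/Zpart mulr_sumr; apply: eq_bigr => s _.
rewrite exprMn -exprM mulnC exprM expr_div_n /gibbs.
by apply: tilt_weight; rewrite ?expf_neq0 ?lt0r_neq0 ?Zpart_gt0.
Qed.

End GibbsTilting.

Theorem lemma7p4 (R : realType) (alpha Delta : nat) (bmu bnu : R)
  (T : finType) (e : rel T) :
  (2 <= alpha)%N -> (3 <= Delta)%N ->
  bnu < bmu -> (Delta%:R - 2) / Delta%:R <= bnu ->
  (bnu / bmu) ^+ alpha * bmu < (Delta%:R - 2) / Delta%:R ->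
  simple_graph e -> regular e Delta ->
  let beta := (bnu / bmu) ^+ alpha * bmu in
  let S := Zpart e bnu ^+ alpha / Zpart e bmu ^+ (alpha - 1)
           * \sum_(s : spin T) gibbs e bmu s
               * (gibbs e bnu s / gibbs e bmu s + 1) ^+ alpha in
  Zpart e beta <= S /\ S <= 3%:R ^+ alpha * Zpart e beta.
Proof.
move=> alpha_ge2 Delta_ge3 bnu_lt_bmu bnu_ge _ _ _ beta S.
have bnu_gt0 : 0 < bnu.
  have Delta_ge3R : (3 : R) <= Delta%:R by rewrite ler_nat.
  by apply: lt_le_trans bnu_ge; rewrite divr_gt0 //; lra.
have bmu_gt0 : 0 < bmu := lt_trans bnu_gt0 bnu_lt_bmu.
set P := Zpart e bnu ^+ alpha / Zpart e bmu ^+ (alpha - 1).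
have P_ge0 : 0 <= P by rewrite divr_ge0 ?exprn_ge0 ?ltW ?Zpart_gt0.
set w := gibbs e bmu; set x := fun s => gibbs e bnu s / w s.
have w_ge0 s : 0 <= w s by rewrite ltW ?gibbs_gt0.
have x_ge0 s : 0 <= x s by rewrite divr_ge0 ?ltW ?gibbs_gt0.
have mean_x : \sum_s w s * x s = 1.
  rewrite -(sum_gibbs e bnu_gt0); apply: eq_bigr => s _.
  by rewrite mulrC divfK // gt_eqF ?gibbs_gt0.
have -> : Zpart e beta = P * \sum_s w s * x s ^+ alpha.
  by rewrite Zpart_tilt // ltnW.
split; first by rewrite ler_wpM2l // moment_le_shifted.
rewrite mulrCA ler_wpM2l //.
exact: shifted_moment_le w_ge0 x_ge0 (sum_gibbs e bmu_gt0) mean_x _ alpha_ge2.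
Qed.
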